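(* Let $\mathcal{X},\mathcal{Y}$ be finite Markov chains and $C:{\bm X}\times{\bm Y}\to\mathbb{R}_+$ a cost function. Then for every $k\in\mathbb{N}$, $d^{(k)}_{\mathrm{WL}}(\mathcal{X},\mathcal{Y};C)=\lim_{\delta\to0}d^{\delta,(k)}_{\mathrm{WL}}(\mathcal{X},\mathcal{Y};C)$. Consequently, when $\mathcal{X},\mathcal{Y}$ are stationary, $d^{(\infty)}_{\mathrm{WL}}(\mathcal{X},\mathcal{Y};C)=\lim_{k\to\infty}\lim_{\delta\to0}d^{\delta,(k)}_{\mathrm{WL}}(\mathcal{X},\mathcal{Y};C)$.
   Context: A finite Markov chain $\mathcal{X}=({\bm X},m^{\bm X}_\bullet,\nu^{\bm X})$ consists of a finite set ${\bm X}$, a transition kernel $m^{\bm X}_\bullet:{\bm X}\to\mathcal{P}({\bm X})$ and an initial distribution $\nu^{\bm X}$; it is stationary if $\nu^{\bm X}$ is stationary for $m^{\bm X}_\bullet$. $\mathcal{C}(\alpha,\beta)$ denotes the set of couplings. A Markovian coupling between $\mathcal{X}$ and $\mathcal{Y}$ is a (possibly time-inhomogeneous) Markov chain $(X_t,Y_t)_{t\in\mathbb{N}}$ on ${\bm X}\times{\bm Y}$ with $\mathrm{law}(X_0,Y_0)\in\mathcal{C}(\nu^{\bm X},\nu^{\bm Y})$ and, for all $t,x,y$, the conditional law of $(X_{t+1},Y_{t+1})$ given $(X_t,Y_t)=(x,y)$ in $\mathcal{C}(m^{\bm X}_x,m^{\bm Y}_y)$; $\Pi(\mathcal{X},\mathcal{Y})$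 is the set of Markovian couplings. $d^{(k)}_{\mathrm{WL}}(\mathcal{X},\mathcal{Y};C)=\inf_{\Pi(\mathcal{X},\mathcal{Y})}\mathbb{E}\,C(X_k,Y_k)$ and, for stationary chains, $d^{(\infty)}_{\mathrm{WL}}=\sup_{k\in\mathbb{N}}d^{(k)}_{\mathrm{WL}}$. For $\delta\in[0,1]$ and $k\in\mathbb{N}$, $d^{\delta,(k)}_{\mathrm{WL}}(\mathcal{X},\mathcal{Y};C)=\inf_{\Pi(\mathcal{X},\mathcal{Y})}\mathbb{E}\big[\sum_{t=0}^{k-1}\delta(1-\delta)^tC(X_t,Y_t)+(1-\delta)^kC(X_k,Y_k)\big]$. *)

From HB Require Import structures.
From mathcomp Require Import all_boot all_order all_algebra.
From mathcomp Require Import all_classical all_reals all_analysis.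

Set Implicit Arguments.
Unset Strict Implicit.
Unset Printing Implicit Defensive.

Import Order.TTheory GRing.Theory Num.Theory.
Import numFieldNormedType.Exports.
Local Open Scope classical_set_scope.
Local Open Scope ring_scope.

Section WL.
Variable R : realType.

Definition is_distr (T : finType) (p : T -> R) : Prop :=
  (forall t, 0 <= p t) /\ \sum_(t : T) p t = 1.

Definition is_kernel (T : finType) (m : T -> T -> R) : Prop :=
  forall x, is_distr (m x).

Definition is_stationary (T : finType) (m : T -> T -> R) (nu : T -> R) : Prop :=
  forall y, nu y = \sum_(x : T) nu x * m x y.

Definition is_coupling (X Y : finType) (a : X -> R) (b : Y -> R)
    (g : X * Y -> R) : Prop :=
  (forall z, 0 <= g z) /\
  (forall x, \sum_(y : Y) g (x, y) = a x) /\
  (forall y, \sum_(x : X) g (x, y) = b y).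

(* A (possibly time-inhomogeneous) Markov chain on X * Y is given by its
   initial law mu0 and its transition kernels K t : X*Y -> P(X*Y). *)
Definition markov_coupling (X Y : finType)
    (mX : X -> X -> R) (nuX : X -> R) (mY : Y -> Y -> R) (nuY : Y -> R)
    (mu0 : X * Y -> R) (K : nat -> X * Y -> X * Y -> R) : Prop :=
  is_coupling nuX nuY mu0 /\
  forall t x y, is_coupling (mX x) (mY y) (K t (x, y)).

Fixpoint chain_law (Z : finType) (mu0 : Z -> R) (K : nat -> Z -> Z -> R)
    (t : nat) : Z -> R :=
  match t with
  | 0 => mu0
  | t'.+1 => fun z' => \sum_(z : Z) chain_law mu0 K t' z * K t' z z'
  end.

Definition exp_cost (X Y : finType) (C : X -> Y -> R) (mu0 : X * Y -> R)
    (K : nat -> X * Y -> X * Y -> R) (t : nat) : R :=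
  \sum_(z : X * Y) chain_law mu0 K t z * C z.1 z.2.

Definition dWL (X Y : finType)
    (mX : X -> X -> R) (nuX : X -> R) (mY : Y -> Y -> R) (nuY : Y -> R)
    (C : X -> Y -> R) (k : nat) : R :=
  inf [set e : R | exists mu0 K,
         markov_coupling mX nuX mY nuY mu0 K /\ e = exp_cost C mu0 K k].

Definition dWL_delta (X Y : finType)
    (mX : X -> X -> R) (nuX : X -> R) (mY : Y -> Y -> R) (nuY : Y -> R)
    (C : X -> Y -> R) (delta : R) (k : nat) : R :=
  inf [set e : R | exists mu0 K,
         markov_coupling mX nuX mY nuY mu0 K /\
         e = \sum_(t < k) delta * (1 - delta) ^+ t * exp_cost C mu0 K t
             + (1 - delta) ^+ k * exp_cost C mu0 K k].

(* d^{(infty)}_WL = sup_k d^{(k)}_WL (for stationary chains) *)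
Definition dWL_inf (X Y : finType)
    (mX : X -> X -> R) (nuX : X -> R) (mY : Y -> Y -> R) (nuY : Y -> R)
    (C : X -> Y -> R) : R :=
  sup [set dWL mX nuX mY nuY C k | k in [set: nat]].

End WL.

(** The discount weights delta (1 - delta)^t, t < k, together with (1 - delta)^k
    sum to 1, so the discounted cost of a coupling minus its time-k cost is
    the weighted average of E C(X_t, Y_t) - E C(X_k, Y_k) over t < k, which
    is at most k delta (sum of C) uniformly in the coupling; the two infima
    are therefore within that distance, and d^(delta,(k)) -> d^(k).
    For stationary chains the chain observed from time 1 on is again a
    Markovian coupling, so d^(k) <= d^(k+1); a bounded nondecreasing sequence
    converges to its supremum d^(infty). *)

From HB Require Import structures.
From mathcomp Require Import all_boot all_order all_algebra.
From mathcomp Require Import all_classical all_reals all_analysis.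
From mathcomp Require Import ring lra.

Set Implicit Arguments.
Unset Strict Implicit.
Unset Printing Implicit Defensive.
Import Order.TTheory GRing.Theory Num.Theory.
Import numFieldNormedType.Exports.
Local Open Scope classical_set_scope.
Local Open Scope ring_scope.

Lemma sum_pair (V : nmodType) (X Y : finType) (f : X * Y -> V) :
  \sum_(z : X * Y) f z = \sum_(x : X) \sum_(y : Y) f (x, y).
Proof. by rewrite pair_big; apply: eq_bigr => -[]. Qed.

Section Discounting.
Variable R : realFieldType.

Definition discounted (d : R) (a : nat -> R) (k : nat) : R :=
  \sum_(t < k) d * (1 - d) ^+ t * a t + (1 - d) ^+ k * a k.

Lemma discount_weights_sum (d : R) (k : nat) :
  \sum_(t < k) d * (1 - d) ^+ t + (1 - d) ^+ k = 1.
Proof.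
elim: k => [|k IHk]; first by rewrite big_ord0 add0r expr0.
by rewrite big_ord_recr exprSr /= -[RHS]IHk -addrA; congr (_ + _); ring.
Qed.

Lemma discounted_ge0 (d : R) (a : nat -> R) (k : nat) :
  0 <= d <= 1 -> (forall t, 0 <= a t) -> 0 <= discounted d a k.
Proof.
move=> /andP[d_ge0 d_le1] a_ge0; have e_ge0 : 0 <= 1 - d by rewrite subr_ge0.
apply: addr_ge0; last by rewrite mulr_ge0 ?exprn_ge0.
by apply: sumr_ge0 => t _; rewrite !mulr_ge0 ?exprn_ge0.
Qed.

Lemma dist_discounted (d M : R) (a : nat -> R) (k : nat) :
  0 <= d <= 1 -> (forall t, 0 <= a t <= M) ->
  `|discounted d a k - a k| <= k%:R * d * M.
Proof.
move=> /andP[d_ge0 d_le1] a_bound; have e_ge0 : 0 <= 1 - d by rewrite subr_ge0.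
have -> : discounted d a k - a k = \sum_(t < k) d * (1 - d) ^+ t * (a t - a k).
  under [RHS]eq_bigr do rewrite mulrBr.
  rewrite sumrB -mulr_suml.
  have -> : \sum_(t < k) d * (1 - d) ^+ t = 1 - (1 - d) ^+ k.
    by have := discount_weights_sum d k; lra.
  by rewrite /discounted; ring.
rewrite -mulrA mulr_natl -[X in _ *+ X]card_ord -sumr_const.
apply: (le_trans (ler_norm_sum _ _ _)); apply: ler_sum => t _.
rewrite normrM ger0_norm ?mulr_ge0 ?exprn_ge0 //.
apply: ler_pM; rewrite ?mulr_ge0 ?exprn_ge0 //.
  by rewrite ler_piMr // exprn_ile1 // lerBlDr lerDl.
have /andP[? ?] := a_bound t; have /andP[? ?] := a_bound k.
by rewrite ler_norml; apply/andP; split; lra.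
Qed.

End Discounting.

Lemma cvgr_right0_linear_rate (R : realFieldType) (f : R -> R) (l c : R) :
  0 <= c -> (forall d, 0 < d <= 1 -> `|f d - l| <= c * d) ->
  f d @[d --> 0^'+] --> l.
Proof.
move=> c_ge0 f_near; apply/cvgrPdist_le => e e_gt0.
have ec_gt0 : 0 < e / (c + 1) by rewrite divr_gt0 // ltr_wpDl.
near=> d.
have d_gt0 : 0 < d by near: d; exact: nbhs_right_gt.
have d_le1 : d <= 1 by near: d; exact: nbhs_right_ltW.
have : d < e / (c + 1) by near: d; exact: nbhs_right_lt.
rewrite ltr_pdivlMr ?ltr_wpDl // => d_small.
rewrite distrC; apply: le_trans (f_near d _) _; first by rewrite d_gt0.
nra.
Unshelve. all: by end_near.
Qed.

Section InfImage.
Variables (R : realType) (T : Type) (P : set T).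
Hypothesis P_neq0 : P !=set0.

Lemma inf_image_leD (f g : T -> R) (eps : R) :
  has_lbound (g @` P) -> (forall p, P p -> g p <= f p + eps) ->
  inf (g @` P) <= inf (f @` P) + eps.
Proof.
move=> g_lb gf; rewrite -lerBlDr; apply: lb_le_inf.
  by case: P_neq0 => p Pp; exists (f p), p.
move=> _ [p Pp <-]; rewrite lerBlDr.
by apply: le_trans (gf p Pp); apply: (ge_inf g_lb); exists p.
Qed.

Lemma dist_inf_image (f g : T -> R) (eps : R) :
  has_lbound (f @` P) -> has_lbound (g @` P) ->
  (forall p, P p -> `|f p - g p| <= eps) ->
  `|inf (f @` P) - inf (g @` P)| <= eps.
Proof.
move=> f_lb g_lb fg.
have [gf fg'] : (forall p, P p -> g p <= f p + eps) /\
                (forall p, P p -> f p <= g p + eps).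
  by split=> p /fg; rewrite ler_norml => /andP[? ?]; lra.
have := inf_image_leD g_lb gf; have := inf_image_leD f_lb fg'.
by rewrite ler_norml => ? ?; apply/andP; split; lra.
Qed.

End InfImage.

Lemma is_coupling_prod (R : realType) (X Y : finType) (a : X -> R) (b : Y -> R) :
  is_distr a -> is_distr b -> is_coupling a b (fun z => a z.1 * b z.2).
Proof.
move=> [a_ge0 a_sum] [b_ge0 b_sum]; split; [|split].
- by move=> z; rewrite mulr_ge0.
- by move=> x /=; rewrite -mulr_sumr b_sum mulr1.
- by move=> y /=; rewrite -mulr_suml a_sum mul1r.
Qed.

Section MarkovCouplings.
Variable R : realType.
Variables (X Y : finType) (mX : X -> X -> R) (nuX : X -> R).
Variables (mY : Y -> Y -> R) (nuY : Y -> R).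
Hypotheses (hmX : is_kernel mX) (hnuX : is_distr nuX).
Hypotheses (hmY : is_kernel mY) (hnuY : is_distr nuY).

Local Notation law := (X * Y -> R).
Local Notation kernel := (nat -> X * Y -> X * Y -> R).

Definition couplings : set (law * kernel) :=
  [set p | markov_coupling mX nuX mY nuY p.1 p.2].

Lemma coupling_valuesE (h : law -> kernel -> R) :
  [set e | exists mu0 K, markov_coupling mX nuX mY nuY mu0 K /\ e = h mu0 K] =
  (fun p => h p.1 p.2) @` couplings.
Proof.
apply/seteqP; split=> e /=.
  by move=> [mu0 [K [mc ->]]]; exists (mu0, K).
by move=> [[mu0 K] mc <-]; exists mu0, K.
Qed.

Definition indep_coupling : law * kernel :=
  (fun z => nuX z.1 * nuY z.2, fun _ z z' => mX z.1 z'.1 * mY z.2 z'.2).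

Lemma indep_coupling_in : couplings indep_coupling.
Proof.
split=> [|t x y]; first exact: is_coupling_prod.
exact: is_coupling_prod (hmX x) (hmY y).
Qed.

Lemma chain_law_distr (p : law * kernel) :
  couplings p -> forall t, is_distr (chain_law p.1 p.2 t).
Proof.
case: p => mu0 K [[mu0_ge0 [mu0_X _]] K_coupling] /=.
elim => [|t [law_ge0 law_sum]] /=.
  by split=> //; rewrite sum_pair; under eq_bigr do rewrite mu0_X; case: hnuX.
split=> [z'|].
  apply: sumr_ge0 => -[x y] _; have [K_ge0 _] := K_coupling t x y.
  exact: mulr_ge0.
rewrite exchange_big -[RHS]law_sum; apply: eq_bigr => -[x y] _ /=.
have [_ [K_X _]] := K_coupling t x y.
rewrite -mulr_sumr sum_pair; under eq_bigr do rewrite K_X.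
by case: (hmX x) => _ ->; rewrite mulr1.
Qed.

Definition shift_coupling (p : law * kernel) : law * kernel :=
  (chain_law p.1 p.2 1, fun t => p.2 t.+1).

Lemma chain_law_shift (p : law * kernel) t :
  chain_law (shift_coupling p).1 (shift_coupling p).2 t = chain_law p.1 p.2 t.+1.
Proof. by elim: t => [|t IHt] //=; rewrite IHt. Qed.

Lemma shift_coupling_in (p : law * kernel) :
  is_stationary mX nuX -> is_stationary mY nuY ->
  couplings p -> couplings (shift_coupling p).
Proof.
move=> statX statY cp; have [law1_ge0 _] := chain_law_distr cp 1.
case: p cp law1_ge0 => mu0 K [[_ [mu0_X mu0_Y]] K_coupling] law1_ge0 /=.
split=> [|t]; last exact: K_coupling.
split=> //; split=> [x'|y'] /=.
  rewrite exchange_big sum_pair statX; apply: eq_bigr => x _.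
  rewrite -mu0_X mulr_suml; apply: eq_bigr => y _.
  by rewrite -mulr_sumr; case: (K_coupling 0%N x y) => _ [-> _].
rewrite exchange_big sum_pair statY exchange_big; apply: eq_bigr => y _.
rewrite -mu0_Y mulr_suml; apply: eq_bigr => x _.
by rewrite -mulr_sumr; case: (K_coupling 0%N x y) => _ [_ ->].
Qed.

Lemma couplings_neq0 : couplings !=set0.
Proof. by exists indep_coupling; exact: indep_coupling_in. Qed.

Variable C : X -> Y -> R.
Hypothesis C_ge0 : forall x y, 0 <= C x y.

Let total_cost := \sum_(z : X * Y) C z.1 z.2.

Lemma exp_cost_ge0 (p : law * kernel) t :
  couplings p -> 0 <= exp_cost C p.1 p.2 t.
Proof.
move=> /chain_law_distr/(_ t) [law_ge0 _].
by apply: sumr_ge0 => z _; rewrite mulr_ge0.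
Qed.

Lemma exp_cost_le_total (p : law * kernel) t :
  couplings p -> exp_cost C p.1 p.2 t <= total_cost.
Proof.
move=> /chain_law_distr/(_ t) [law_ge0 law_sum].
rewrite /exp_cost -[leRHS]mul1r -law_sum mulr_suml; apply: ler_sum => z _.
rewrite ler_wpM2l // /total_cost (bigD1 z) //= lerDl.
by apply: sumr_ge0 => *.
Qed.

Lemma exp_cost_lbound t :
  has_lbound ((fun p => exp_cost C p.1 p.2 t) @` couplings).
Proof. by exists 0 => _ [p cp <-]; exact: exp_cost_ge0. Qed.

Lemma dWLE k :
  dWL mX nuX mY nuY C k = inf ((fun p => exp_cost C p.1 p.2 k) @` couplings).
Proof. by rewrite /dWL coupling_valuesE. Qed.

Lemma dWL_deltaE d k :
  dWL_delta mX nuX mY nuY C d k =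
  inf ((fun p => discounted d (exp_cost C p.1 p.2) k) @` couplings).
Proof.
by rewrite /dWL_delta
  (coupling_valuesE (fun mu0 K => discounted d (exp_cost C mu0 K) k)).
Qed.

Lemma dist_dWL_delta d k : 0 <= d <= 1 ->
  `|dWL_delta mX nuX mY nuY C d k - dWL mX nuX mY nuY C k|
    <= k%:R * total_cost * d.
Proof.
move=> d01; rewrite dWL_deltaE dWLE; apply: (dist_inf_image couplings_neq0).
- by exists 0 => _ [p cp <-]; apply: discounted_ge0 => // t; exact: exp_cost_ge0.
- exact: exp_cost_lbound.
- move=> p cp; rewrite mulrAC; apply: dist_discounted => // t.
  by rewrite exp_cost_ge0 ?exp_cost_le_total.
Qed.

Lemma dWL_le_total k : dWL mX nuX mY nuY C k <= total_cost.
Proof.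
rewrite dWLE; apply: le_trans (exp_cost_le_total k indep_coupling_in).
apply: (ge_inf (exp_cost_lbound k)).
by exists indep_coupling => //; exact: indep_coupling_in.
Qed.

Lemma nondecreasing_dWL : is_stationary mX nuX -> is_stationary mY nuY ->
  {homo dWL mX nuX mY nuY C : n m / (n <= m)%N >-> n <= m}.
Proof.
move=> statX statY; apply/nondecreasing_seqP => k; rewrite !dWLE.
apply: lb_le_inf.
  by case: couplings_neq0 => p cp; exists (exp_cost C p.1 p.2 k.+1), p.
move=> _ [p cp <-]; apply: (ge_inf (exp_cost_lbound k)).
exists (shift_coupling p); first exact: shift_coupling_in.
by apply: eq_bigr => z _; rewrite chain_law_shift.
Qed.

End MarkovCouplings.

Theorem theorem15 (R : realType) (X Y : finType)
    (mX : X -> X -> R) (nuX : X -> R) (mY : Y -> Y -> R) (nuY : Y -> R)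
    (C : X -> Y -> R)
    (hmX : is_kernel mX) (hnuX : is_distr nuX)
    (hmY : is_kernel mY) (hnuY : is_distr nuY)
    (hC : forall x y, 0 <= C x y) :
  (forall k : nat,
     dWL_delta mX nuX mY nuY C delta k @[delta --> 0^'+] -->
       dWL mX nuX mY nuY C k) /\
  (is_stationary mX nuX -> is_stationary mY nuY ->
     (fun k : nat => lim (dWL_delta mX nuX mY nuY C delta k @[delta --> 0^'+]))
       @ \oo --> dWL_inf mX nuX mY nuY C).
Proof.
pose total_cost := \sum_(z : X * Y) C z.1 z.2.
have total_cost_ge0 : 0 <= total_cost by apply: sumr_ge0.
have dWL_delta_cvg k : dWL_delta mX nuX mY nuY C delta k @[delta --> 0^'+] -->
    dWL mX nuX mY nuY C k.
  apply: (@cvgr_right0_linear_rate _ _ _ (k%:R * total_cost)).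
    exact: mulr_ge0.
  by move=> d /andP[d_gt0 d_le1]; apply: dist_dWL_delta; rewrite ?(ltW d_gt0).
split=> // statX statY.
have -> : (fun k => lim (dWL_delta mX nuX mY nuY C delta k @[delta --> 0^'+])) =
    dWL mX nuX mY nuY C.
  by apply: funext => k; apply: cvg_lim.
apply: nondecreasing_cvgn; first exact: nondecreasing_dWL.
by exists total_cost => _ [k _ <-]; exact: dWL_le_total.
Qed.
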